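(* Let $G$ be a crossing closed graph on $[n]$. Then $G$ is upper crossing closed if and only if $G$ contains no obstruction as a subgraph.
   Context: Graphs are finite simple graphs with vertex set $[n]$; edges are written $ij$ with $i<j$. Two edges $a_1a_2$ and $b_1b_2$ cross if $a_1<b_1<a_2<b_2$ or $b_1<a_1<b_2<a_2$. Two crossing edges $e,f$ are crossing closed if among all induced connected subgraphs of $G$ containing $e$ and $f$ there is a unique minimal one under containment, denoted $J(e,f)$; $G$ is crossing closed if all pairs of crossing edges are. $G$ is upper crossing closed if it is crossing closed and there is a total order $\unlhd$ on $E(G)$ such that for every pair of crossing edges $e,f$, $J(e,f)$ contains an edge $h$ with $h\lhd e$ and $h\lhd f$. For crossing closed $G$, a subgraph $H$ of $G$ is an obstruction if for every edge $e$ of $H$ there is an edge $f$ of $H$ crossing $e$ with $J(e,f)\subseteq H$. *)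

From mathcomp Require Import all_boot all_order.
Set Implicit Arguments. Unset Strict Implicit. Unset Printing Implicit Defensive.

(* Vertex set [n] is 'I_n (with its natural order); an edge ij (i<j) is the pair (i,j). *)
Definition edge n := ('I_n * 'I_n)%type.

Definition simple_graph n (E : {set edge n}) : Prop :=
  forall e, e \in E -> (e.1 < e.2)%N.

Definition cross n (e f : edge n) : bool :=
  ((e.1 < f.1) && (f.1 < e.2) && (e.2 < f.2))%N ||
  ((f.1 < e.1) && (e.1 < f.2) && (f.2 < e.2))%N.

Definition adj n (E : {set edge n}) (x y : 'I_n) : bool :=
  ((x, y) \in E) || ((y, x) \in E).

Definition in_induced n (E : {set edge n}) (S : {set 'I_n}) (h : edge n) : bool :=
  [&& h \in E, h.1 \in S & h.2 \in S].

Definition induced_connected n (E : {set edge n}) (S : {set 'I_n}) : Prop :=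
  S != set0 /\
  forall x y, x \in S -> y \in S ->
    connect (fun u v => [&& u \in S, v \in S & adj E u v]) x y.

Definition candidate n (E : {set edge n}) (e f : edge n) (S : {set 'I_n}) : Prop :=
  in_induced E S e /\ in_induced E S f /\ induced_connected E S.

(* S is a minimal such subgraph (induced subgraphs are ordered by their vertex sets). *)
Definition minimal_candidate n (E : {set edge n}) (e f : edge n) (S : {set 'I_n}) : Prop :=
  candidate E e f S /\ forall T, candidate E e f T -> T \subset S -> T = S.

Definition isJ n (E : {set edge n}) (e f : edge n) (S : {set 'I_n}) : Prop :=
  minimal_candidate E e f S /\ forall T, minimal_candidate E e f T -> T = S.

Definition crossing_closed_pair n (E : {set edge n}) (e f : edge n) : Prop :=
  exists S, isJ E e f S.

Definition crossing_closed n (E : {set edge n}) : Prop :=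
  forall e f, e \in E -> f \in E -> cross e f -> crossing_closed_pair E e f.

Definition total_order_on n (E : {set edge n}) (le : rel (edge n)) : Prop :=
  (forall e, e \in E -> le e e) /\
  (forall e f, e \in E -> f \in E -> le e f -> le f e -> e = f) /\
  (forall e f g, e \in E -> f \in E -> g \in E -> le e f -> le f g -> le e g) /\
  (forall e f, e \in E -> f \in E -> le e f || le f e).

Definition upper_crossing_closed n (E : {set edge n}) : Prop :=
  crossing_closed E /\
  exists le : rel (edge n), total_order_on E le /\
    forall e f, e \in E -> f \in E -> cross e f ->
      forall S, isJ E e f S ->
        exists h, [/\ in_induced E S h,
                      le h e && (h != e) & le h f && (h != f)].

Definition subgraph n (E : {set edge n}) (VH : {set 'I_n}) (EH : {set edge n}) : Prop :=
  EH \subset E /\ forall h, h \in EH -> (h.1 \in VH) && (h.2 \in VH).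

Definition induced_sub n (E : {set edge n}) (S VH : {set 'I_n}) (EH : {set edge n}) : Prop :=
  S \subset VH /\ forall h, in_induced E S h -> h \in EH.

(* Obstruction (taken nonempty: at least one edge). *)
Definition obstruction n (E : {set edge n}) (VH : {set 'I_n}) (EH : {set edge n}) : Prop :=
  subgraph E VH EH /\ EH != set0 /\
  forall e, e \in EH -> exists f, [/\ f \in EH, cross e f &
     forall S, isJ E e f S -> induced_sub E S VH EH].

From mathcomp Require Import all_boot all_order.
From Stdlib Require Import Classical.

Set Implicit Arguments. Unset Strict Implicit. Unset Printing Implicit Defensive.

(* If [G] is upper crossing closed, the least edge [m] of an obstruction [H]
   crosses some [f] with [J(m,f)] inside [H], so [J(m,f)] contains an edge of
   [H] below [m]: impossible.  Conversely, without obstructions the edges can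
   be ranked greedily from the bottom: the set [R] of edges not yet ranked is
   not an obstruction, so some [e] in [R] has, for every [f] in [R] crossing
   it, an already ranked edge in [J(e,f)]; rank [e] next.  In the resulting
   order, [J(e,f)] contains an edge ranked below the lower of [e] and [f]. *)

Lemma cross_sym n (e f : edge n) : cross e f = cross f e.
Proof. by rewrite /cross orbC. Qed.

Lemma candidate_sym n (E : {set edge n}) e f S :
  candidate E e f S -> candidate E f e S.
Proof. by move=> [eS [fS conS]]. Qed.

Lemma minimal_candidate_sym n (E : {set edge n}) e f S :
  minimal_candidate E e f S -> minimal_candidate E f e S.
Proof.
move=> [candS minS]; split; first exact: candidate_sym.
by move=> T /candidate_sym; apply: minS.
Qed.

Lemma isJ_sym n (E : {set edge n}) e f S : isJ E e f S -> isJ E f e S.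
Proof.
move=> [minS uniqS]; split; first exact: minimal_candidate_sym.
by move=> T /minimal_candidate_sym; apply: uniqS.
Qed.

Lemma isJ_unique n (E : {set edge n}) e f S T : isJ E e f S -> isJ E e f T -> T = S.
Proof. by move=> [_ uniqS] [minT _]; apply: uniqS. Qed.

Section UpperCrossingClosed.

Variables (n : nat) (E : {set edge n}).

Lemma total_order_on_min (le : rel (edge n)) (A : {set edge n}) :
  total_order_on E le -> A \subset E -> A != set0 ->
  exists2 m, m \in A & {in A, forall x, le m x}.
Proof.
move=> [le_refl [_ [le_trans le_total]]] /subsetP AE /set0Pn[a aA].
have [m mA m_min] := @extremum_inP _ _ le a (mem A) id
  (fun x xA => le_refl x (AE x xA))
  (fun y x z yA xA zA => le_trans x y z (AE x xA) (AE y yA) (AE z zA))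
  (fun x y xA yA => le_total x y (AE x xA) (AE y yA)) aA.
by exists m.
Qed.

Lemma upper_crossing_closed_obstruction_free :
  upper_crossing_closed E -> ~ exists VH EH, obstruction E VH EH.
Proof.
move=> [cc [le [le_order below]]] [VH [EH [[EH_E _] [EH0 obsEH]]]].
have [m mEH m_min] := total_order_on_min le_order EH_E EH0.
have [f [fEH cmf J_in_EH]] := obsEH m mEH.
have mE := subsetP EH_E m mEH; have fE := subsetP EH_E f fEH.
have [S JS] := cc m f mE fE cmf.
have [h [hS /andP[hm h_neq_m] _]] := below m f mE fE cmf S JS.
have hEH : h \in EH by apply: (J_in_EH S JS).2.
have [_ [le_anti _]] := le_order.
have hE : h \in E by case/and3P: hS.
by rewrite (le_anti h m hE mE hm (m_min h hEH)) eqxx in h_neq_m.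
Qed.

(* [s] lists edges from the lowest rank up; edges outside [s] count as ranked
   below all of [s]. *)
Definition upward_ranked (s : seq (edge n)) : Prop :=
  forall x f S, x \in s -> f \in s -> index x s <= index f s -> cross x f ->
    isJ E x f S -> exists2 h, in_induced E S h & (h \notin s) || (index h s < index x s).

Lemma upward_ranked_cons (e : edge n) (s : seq (edge n)) :
  e \notin s ->
  (forall f S, f \in e :: s -> cross e f -> isJ E e f S ->
     exists2 h, in_induced E S h & h \notin e :: s) ->
  upward_ranked s -> upward_ranked (e :: s).
Proof.
move=> e_notin_s e_bottom s_ranked x f S; rewrite in_cons.
case: (eqVneq x e) => [-> _ fs _ cef JS | xe /= xs].
  by have [h hS h_out] := e_bottom f S fs cef JS; exists h; rewrite ?h_out.
rewrite [e == x]eq_sym (negbTE xe).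
case: (eqVneq e f) => [-> _ //=| ef /=].
rewrite in_cons [f == e]eq_sym (negbTE ef) ltnS => fs ixf cxf JS.
have [h hS h_low] := s_ranked x f S xs fs ixf cxf JS.
exists h => //; rewrite in_cons.
case: (eqVneq h e) => [->|he]; first by rewrite ltn0Sn orbT.
by rewrite ltnS.
Qed.

Lemma obstruction_free_bottom_edge (R : {set edge n}) :
  ~ obstruction E setT R -> R \subset E -> R != set0 ->
  exists2 e, e \in R & forall f S, f \in R -> cross e f -> isJ E e f S ->
    exists2 h, in_induced E S h & h \notin R.
Proof.
move=> R_free RE R0; apply: NNPP => no_bottom; apply: R_free.
split; first by split=> // h _; rewrite !in_setT.
split=> // e eR; apply: NNPP => no_f; apply: no_bottom; exists e => // f S fR cef JS.
apply: NNPP => no_h; apply: no_f; exists f; split=> // S' JS'.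
rewrite (isJ_unique JS JS'); split; first exact: subsetT.
by move=> h hS; apply: NNPP => hR; apply: no_h; exists h => //; apply/negP.
Qed.

Lemma upward_ranking_exists :
  (~ exists VH EH, obstruction E VH EH) ->
  forall R : {set edge n}, R \subset E -> exists2 s, s =i R & upward_ranked s.
Proof.
move=> no_obs R; elim: {R}#|R| {-2}R (erefl #|R|) => [|k IH] R cardR RE.
  by exists [::] => // x; rewrite (cards0_eq cardR) in_set0.
have R0 : R != set0 by rewrite -card_gt0 cardR.
have R_free : ~ obstruction E setT R by move=> obsR; apply: no_obs; exists setT, R.
have [e eR e_bottom] := obstruction_free_bottom_edge R_free RE R0.
have cardRe : #|R :\ e| = k by move: cardR; rewrite (cardsD1 e R) eR => -[].
have [s sRe s_ranked] := IH _ cardRe (subset_trans (subsetDl R _) RE).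
have esR : e :: s =i R.
  by move=> x; rewrite in_cons sRe !inE; case: eqVneq => // ->.
exists (e :: s) => //; apply: upward_ranked_cons => //.
  by rewrite sRe !inE eqxx.
move=> f S; rewrite esR => fR cef JS.
by have [h hS hR] := e_bottom f S fR cef JS; exists h; rewrite ?esR.
Qed.

Lemma upward_ranked_upper_crossing_closed s :
  crossing_closed E -> s =i E -> upward_ranked s -> upper_crossing_closed E.
Proof.
move=> cc sE s_ranked; split=> //.
exists (fun x y => index x s <= index y s); split.
  split=> [e _|]; first exact: leqnn.
  split=> [e f eE fE ef fe|].
    by apply: (@index_inj _ e s); rewrite ?sE //=; apply/eqP; rewrite eqn_leq ef fe.
  by split=> [e f g _ _ _|e f _ _]; [apply: leq_trans | apply: leq_total].
have below_both x y : index x s < index y s -> (index x s <= index y s) && (x != y).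
  by move=> lt; rewrite ltnW //; apply: contraTneq lt => ->; rewrite ltnn.
suff low_edge e f S : e \in E -> f \in E -> cross e f -> isJ E e f S ->
    index e s <= index f s -> exists2 h, in_induced E S h & index h s < index e s.
  move=> e f eE fE cef S JS.
  have [ef|fe] := leqP (index e s) (index f s).
    have [h hS he] := low_edge e f S eE fE cef JS ef.
    by exists h; split; rewrite // below_both // (leq_trans he).
  rewrite cross_sym in cef.
  have [h hS hf] := low_edge f e S fE eE cef (isJ_sym JS) (ltnW fe).
  by exists h; split; rewrite // below_both // (ltn_trans hf).
move=> eE fE cef JS ef; have [es fs] : e \in s /\ f \in s by rewrite !sE.
have [h hS h_low] := s_ranked e f S es fs ef cef JS; exists h => //.
have hE : h \in E by case/and3P: hS.
by move: h_low; rewrite sE hE.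
Qed.

End UpperCrossingClosed.

Theorem theoremA4 (n : nat) (E : {set edge n}) :
  simple_graph E -> crossing_closed E ->
  (upper_crossing_closed E <->
   ~ (exists (VH : {set 'I_n}) (EH : {set edge n}), obstruction E VH EH)).
Proof.
move=> _ cc; split; first exact: upper_crossing_closed_obstruction_free.
move=> no_obs; have [s sE s_ranked] := upward_ranking_exists no_obs (subxx E).
exact: upward_ranked_upper_crossing_closed cc sE s_ranked.
Qed.
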